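(* Let $s=(s_1,\dots,s_m)$ be a sequence of positive integers. Then the $s$-permutahedron (the Hasse diagram of the $s$-weak order on $s$-decreasing trees) has a Hamilton path, i.e., there is a listing of all $s$-decreasing trees, each exactly once, in which every two consecutive trees form a cover relation of the $s$-weak order.
   Context: Let $s=(s_1,\dots,s_m)$ be a sequence of positive integers. An $s$-decreasing tree is a rooted plane tree with $m$ internal nodes labelled $1,\dots,m$ (together with unlabelled leaves) such that the internal node labelled $i$ has exactly $s_i+1$ children, ordered from left to right and indexed $0,1,\dots,s_i$, and labels strictly decrease along every path from the root (so the root is labelled $m$). For an $s$-decreasing tree $T$ and labels $a<b$, the tree-inversion number $\#_T(b,a)$ is defined as: $0$ if $a$ lies to the left of $b$ or in the subtree of the child of $b$ with index $0$; $i$ if $a$ lies in the subtree of the child of $b$ with index $i$ ($0\le i\le s_b$); and $s_b$ if $a$ lies to the right of $b$. The $s$-weak order is the partial order on $s$-decreasing trees given by $T\le T'$ iff $\#_T(b,a)\le \#_{T'}(b,a)$ for all $1\le a<b\le m$. The $s$-permutahedron is the graph whose vertices are the $s$-decreasing trees and whose edges are the cover relations of the $s$-weak order. *)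

From Stdlib Require List.
From mathcomp Require Import all_boot.
Set Implicit Arguments. Unset Strict Implicit. Unset Printing Implicit Defensive.

(* Rooted plane trees: leaves are unlabelled, internal nodes carry a label
   and an ordered (left-to-right) list of children, indexed 0,1,... *)
Inductive tree : Type :=
| Leaf : tree
| Node : nat -> seq tree -> tree.

(* s = (s_1,...,s_m) is a seq nat; s_i := nth 0 s (i-1), m := size s. *)
Definition s_at (s : seq nat) (i : nat) : nat := nth 0 s i.-1.

Fixpoint labels (T : tree) : seq nat :=
  match T with
  | Leaf => [::]
  | Node i cs => i :: flatten (map labels cs)
  end.

Definition root_label_lt (i : nat) (c : tree) : bool :=
  match c with Leaf => true | Node j _ => j < i end.

(* local conditions: node labelled i has s_i + 1 children, and the labels of
   its internal children are smaller than i (hence labels strictly decrease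
   along every path from the root). *)
Fixpoint local_ok (s : seq nat) (T : tree) : bool :=
  match T with
  | Leaf => true
  | Node i cs =>
      [&& size cs == (s_at s i).+1, all (root_label_lt i) cs & all (local_ok s) cs]
  end.

Definition s_decreasing (s : seq nat) (T : tree) : Prop :=
  perm_eq (labels T) (iota 1 (size s)) /\ local_ok s T.

(* Address of the internal node labelled x: sequence of child indices from
   the root (None if there is no such node). *)
Fixpoint addr (x : nat) (T : tree) : option (seq nat) :=
  match T with
  | Leaf => None
  | Node i cs =>
      if i == x then Some [::] else
      (fix go (k : nat) (cs : seq tree) : option (seq nat) :=
         match cs with
         | [::] => None
         | c :: cs' => match addr x c with
                       | Some p => Some (k :: p)
                       | None => go k.+1 cs'
                       end
         end) 0 cs
  end.

(* The node at address pa lies strictly to the left of the node at address pb: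
   at the first position where the addresses differ, pa takes a smaller child
   index. *)
Fixpoint left_of (pa pb : seq nat) : bool :=
  match pa, pb with
  | x :: pa', y :: pb' => if x == y then left_of pa' pb' else x < y
  | _, _ => false
  end.

(* Tree-inversion number #_T(b,a) (intended for a < b):
   - i   if a lies in the subtree of the child of b with index i;
   - 0   if a lies to the left of b;
   - s_b if a lies to the right of b. *)
Definition tinv (s : seq nat) (T : tree) (b a : nat) : nat :=
  match addr a T, addr b T with
  | Some pa, Some pb =>
      if prefix pb pa then nth 0 pa (size pb)
      else if left_of pa pb then 0 else s_at s b
  | _, _ => 0
  end.

Definition s_le (s : seq nat) (T T' : tree) : Prop :=
  forall a b, 0 < a -> a < b -> b <= size s -> tinv s T b a <= tinv s T' b a.

Definition s_cover (s : seq nat) (T T' : tree) : Prop :=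
  [/\ s_decreasing s T, s_decreasing s T', s_le s T T', T <> T' &
      forall U, s_decreasing s U -> s_le s T U -> s_le s U T' ->
        U = T \/ U = T'].

From Stdlib Require List.
From mathcomp Require Import all_boot zify.
Set Implicit Arguments. Unset Strict Implicit. Unset Printing Implicit Defensive.

(* The s-decreasing trees on the labels k+1..m are exactly the trees obtained
   from those on k+2..m by replacing one of their leaves by the node k+1 (whose
   children are all leaves).  Grafting at the j-th leaf gives inversions
   #(b, k+1) that sum to j: all 0 at the first leaf, all maximal (s_b) at the
   last one, and moving the graft one leaf to the right raises a single one of
   them by 1.  The total inversion weight is strictly monotone for the s-weak
   order and a tree is determined by its inversions, so such a move is a cover
   relation.  As in the Steinhaus-Johnson-Trotter algorithm, a Hamilton path for
   k+1..m is obtained from one for k+2..m by sweeping k+1 across the leaves of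
   each tree, alternately left to right and right to left: consecutive sweeps
   meet at the same extreme leaf, where the inversions of k+1 agree, so the step
   between them is inherited from the shorter path. *)

Definition tree_ind_In (P : tree -> Prop) (P_Leaf : P Leaf)
    (P_Node : forall i cs, (forall c, List.In c cs -> P c) -> P (Node i cs)) :
    forall T, P T :=
  fix F T := match T with
  | Leaf => P_Leaf
  | Node i cs => P_Node i cs ((fix G (cs : seq tree) : forall c, List.In c cs -> P c :=
       match cs with
       | [::] => fun c H => False_ind _ H
       | c0 :: cs' => fun c H => match H with
                     | or_introl e => eq_ind c0 P (F c0) c e
                     | or_intror H' => G cs' c H' end
       end) cs)
  end.

Lemma all_In (A : Type) (p : pred A) cs c : all p cs -> List.In c cs -> p c.
Proof. by elim: cs => //= c' cs IH /andP[pc' pcs] [<-|/IH]; last exact. Qed.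

Lemma In_all (A : Type) (p : pred A) cs : (forall c, List.In c cs -> p c) -> all p cs.
Proof.
elim: cs => //= c cs IH H; rewrite H ?IH //; last by left.
by move=> c' Hc'; apply: H; right.
Qed.

Fixpoint nleaves (T : tree) : nat :=
  match T with Leaf => 1 | Node _ cs => sumn (map nleaves cs) end.

Lemma labels_Node i cs : labels (Node i cs) = i :: flatten (map labels cs).
Proof. by []. Qed.

Lemma flatten_labels_cons c cs :
  flatten (map labels (c :: cs)) = labels c ++ flatten (map labels cs).
Proof. by []. Qed.

Lemma local_ok_Node s i cs : local_ok s (Node i cs) =
  [&& size cs == (s_at s i).+1, all (root_label_lt i) cs & all (local_ok s) cs].
Proof. by []. Qed.

Lemma flatten_labels_split b cs : b \in flatten (map labels cs) ->
  exists cs1 c cs2, [/\ cs = cs1 ++ c :: cs2, b \in labels c &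
                        b \notin flatten (map labels cs1)].
Proof.
elim: cs => [|c cs IH] //; rewrite flatten_labels_cons mem_cat.
case Hc: (b \in labels c) => /=; first by exists [::], c, cs.
move=> /IH [cs1 [c' [cs2 [-> bc' bcs1]]]].
by exists (c :: cs1), c', cs2; rewrite flatten_labels_cons mem_cat Hc.
Qed.

Lemma leaf_index_split j cs : j < sumn (map nleaves cs) ->
  exists cs1 c cs2 jj,
    [/\ cs = cs1 ++ c :: cs2, j = sumn (map nleaves cs1) + jj & jj < nleaves c].
Proof.
elim: cs j => [|c cs IH] j //=.
case: (ltnP j (nleaves c)) => [jc _|cj]; first by exists [::], c, cs, j.
rewrite -ltn_subLR // => /IH [cs1 [c' [cs2 [jj [-> Ej jc']]]]].
by exists (c :: cs1), c', cs2, jj; rewrite /= -addnA -Ej subnKC.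
Qed.

Fixpoint addr_seq (b k : nat) (cs : seq tree) : option (seq nat) :=
  match cs with
  | [::] => None
  | c :: cs' => if addr b c is Some p then Some (k :: p) else addr_seq b k.+1 cs'
  end.

Lemma addr_Node b i cs :
  addr b (Node i cs) = if i == b then Some [::] else addr_seq b 0 cs.
Proof.
rewrite /=; case: (i == b) => //.
by elim: cs 0 => [|c cs IH] k //=; case: (addr b c).
Qed.

Lemma addr_notin T b : b \notin labels T -> addr b T = None.
Proof.
elim/tree_ind_In: T => [|i cs IH] //.
rewrite addr_Node labels_Node in_cons negb_or eq_sym => /andP[/negbTE -> bcs].
elim: cs 0 IH bcs => //= c cs IHcs k IH.
rewrite mem_cat negb_or => /andP[bc bcs].
rewrite IH //; last by left.
by apply: IHcs => // c' Hc'; apply: IH; right.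
Qed.

Lemma addr_in T b : b \in labels T -> exists p, addr b T = Some p.
Proof.
elim/tree_ind_In: T => [|i cs IH] //.
rewrite addr_Node labels_Node in_cons.
case: eqVneq => [_ _|_] /=; first by eexists.
elim: cs 0 IH => //= c cs IHcs k IH; rewrite mem_cat.
case Hc: (b \in labels c) => /=.
  by have [p ->] := IH c (or_introl erefl) Hc; eexists.
rewrite addr_notin ?Hc // => Hcs; apply: IHcs => // c' Hc'; by apply: IH; right.
Qed.

Lemma addr_seq_cat_notin b k cs1 cs2 : b \notin flatten (map labels cs1) ->
  addr_seq b k (cs1 ++ cs2) = addr_seq b (k + size cs1) cs2.
Proof.
elim: cs1 k => [|c cs1 IH] k /=; first by rewrite addn0.
by rewrite mem_cat negb_or => /andP[bc bcs]; rewrite addr_notin // IH // addSnnS.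
Qed.

Lemma addr_seq_cat_in b k cs1 cs2 : b \in flatten (map labels cs1) ->
  exists t p, t < size cs1 /\ addr_seq b k (cs1 ++ cs2) = Some ((k + t) :: p).
Proof.
elim: cs1 k => [|c cs1 IH] k //=; rewrite mem_cat.
case Hc: (b \in labels c) => /=.
  by have [p ->] := addr_in Hc; exists 0, p; rewrite addn0.
move=> /(IH k.+1) [t [p [lt E]]].
by rewrite addr_notin ?Hc // E; exists t.+1, p; rewrite addSnnS.
Qed.

Lemma tinv_diag s T a : tinv s T a a = 0.
Proof. by rewrite /tinv; case: (addr a T) => // p; rewrite prefix_refl nth_default. Qed.

Lemma tinv_Node_child s i cs1 d cs2 b x :
  uniq (labels (Node i (cs1 ++ d :: cs2))) -> x \in labels d ->
  tinv s (Node i (cs1 ++ d :: cs2)) b x =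
  if b == i then size cs1
  else if b \in flatten (map labels cs1) then s_at s b
  else if b \in labels d then tinv s d b x
  else 0.
Proof.
rewrite labels_Node map_cat flatten_cat flatten_labels_cons.
rewrite cons_uniq !mem_cat !negb_or !cat_uniq has_cat negb_or.
move=> /andP[/and3P[_ id _] /and3P[_ /andP[d1 _] _]] xd.
have x1 : x \notin flatten (map labels cs1).
  by apply: contraNN d1 => x1; apply/hasP; exists x; rewrite // mem_cat xd.
have [px Hpx] := addr_in xd.
rewrite /tinv.
have -> : addr x (Node i (cs1 ++ d :: cs2)) = Some (size cs1 :: px).
  rewrite addr_Node addr_seq_cat_notin //= Hpx add0n.
  by have -> : (i == x) = false by apply: contraNF id => /eqP ->.
rewrite addr_Node eq_sym; case: eqVneq => [_|_] /=; first by [].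
case H1: (b \in flatten (map labels cs1)).
  have [t [p [lt ->]]] := addr_seq_cat_in 0 (d :: cs2) H1.
  by rewrite add0n /= ltn_eqF // gtn_eqF //= ltnNge (ltnW lt).
rewrite addr_seq_cat_notin ?H1 // add0n /=.
case Hd: (b \in labels d); first by have [pb ->] := addr_in Hd; rewrite Hpx /= eqxx.
rewrite addr_notin ?Hd //.
case H2: (b \in flatten (map labels cs2)).
  have [t [p [_ E]]] := addr_seq_cat_in (size cs1).+1 [::] H2.
  by rewrite cats0 in E; rewrite E /= gtn_eqF ?ltn_eqF ?addSn ?ltnS ?leq_addr.
by rewrite -[cs2]cats0 addr_seq_cat_notin ?H2.
Qed.

(** * Grafting a new smallest node at a leaf *)

Section Graft.
Variable s : seq nat.

Definition sprout (x : nat) : tree := Node x (nseq (s_at s x).+1 Leaf).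

(* Leaves are counted from 0, left to right.  The inner fixpoint is
   [graft_seq] below (see [graft_Node]); nested recursion forces it inline. *)
Fixpoint graft (x j : nat) (T : tree) : tree :=
  match T with
  | Leaf => sprout x
  | Node i cs => Node i ((fix graft_seq (j : nat) (cs : seq tree) :=
       match cs with
       | [::] => [::]
       | c :: cs' => if j < nleaves c then graft x j c :: cs'
                     else c :: graft_seq (j - nleaves c) cs'
       end) j cs)
  end.

Fixpoint graft_seq (x j : nat) (cs : seq tree) : seq tree :=
  match cs with
  | [::] => [::]
  | c :: cs' => if j < nleaves c then graft x j c :: cs'
                else c :: graft_seq x (j - nleaves c) cs'
  end.

Lemma graft_Node x j i cs : graft x j (Node i cs) = Node i (graft_seq x j cs).
Proof.
elim: cs j => [|c cs IH] j //=.
by case: (j < nleaves c) => //; case: (IH (j - nleaves c)) => ->.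
Qed.

Lemma graft_seq_cat x cs1 c cs2 jj : jj < nleaves c ->
  graft_seq x (sumn (map nleaves cs1) + jj) (cs1 ++ c :: cs2) =
  cs1 ++ graft x jj c :: cs2.
Proof.
move=> jc; elim: cs1 => [|c' cs1 IH] /=; first by rewrite add0n jc.
by rewrite -addnA ltnNge leq_addr /= addKn IH.
Qed.

Lemma graft_Node_cat x i cs1 c cs2 jj : jj < nleaves c ->
  graft x (sumn (map nleaves cs1) + jj) (Node i (cs1 ++ c :: cs2)) =
  Node i (cs1 ++ graft x jj c :: cs2).
Proof. by move=> jc; rewrite graft_Node graft_seq_cat. Qed.

Lemma nleaves_Node_cat i cs1 c cs2 :
  nleaves (Node i (cs1 ++ c :: cs2)) =
  sumn (map nleaves cs1) + (nleaves c + sumn (map nleaves cs2)).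
Proof. by rewrite /= map_cat sumn_cat. Qed.

Lemma perm_labels_graft x j T : j < nleaves T ->
  perm_eq (labels (graft x j T)) (x :: labels T).
Proof.
elim/tree_ind_In: T j => [|i cs IH] j.
  by rewrite /= => _; elim: (s_at s x).
move=> /leaf_index_split [cs1 [c [cs2 [jj [Ecs -> jc]]]]]; subst cs.
rewrite graft_Node_cat // !labels_Node !map_cat !flatten_cat !flatten_labels_cons.
set A := flatten _; set B := flatten _.
apply: (@perm_trans _ (i :: A ++ (x :: labels c) ++ B)).
  by rewrite perm_cons perm_cat2l perm_cat2r; apply: (IH _ (List.in_elt _ _ _)).
by apply/permP => p /=; rewrite !count_cat /= count_cat; lia.
Qed.

Lemma addr_graft a x j T : a != x -> addr a (graft x j T) = addr a T.
Proof.
move=> ax; elim/tree_ind_In: T j => [|i cs IH] j.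
  rewrite [graft _ _ _]/= /sprout addr_Node eq_sym (negbTE ax).
  by elim: (s_at s x).+1 0 => //= n IHn k; apply: IHn.
rewrite graft_Node !addr_Node; case: (i == a) => //.
elim: cs 0 j IH => [|c cs IHcs] k j IH //=.
case: (j < nleaves c) => /=; first by rewrite IH //; left.
by case: (addr a c) => //; apply: IHcs => c' Hc'; apply: IH; right.
Qed.

Lemma root_label_lt_graft i x j c :
  x < i -> root_label_lt i c -> root_label_lt i (graft x j c).
Proof. by case: c. Qed.

Lemma local_ok_graft x j T : local_ok s T -> (forall l, l \in labels T -> x < l) ->
  local_ok s (graft x j T).
Proof.
elim/tree_ind_In: T j => [|i cs IH] j.
  by rewrite /= size_nseq eqxx /= => _ _; elim: (s_at s x).
rewrite local_ok_Node => /and3P[/eqP Hsz Hr Hl] Hlab.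
have xi : x < i by apply: Hlab; rewrite in_cons eqxx.
have sub l : l \in flatten (map labels cs) -> x < l.
  by move=> Hl'; apply: Hlab; rewrite in_cons Hl' orbT.
rewrite graft_Node local_ok_Node -Hsz.
elim: cs j IH Hr Hl sub {Hsz Hlab} => [|c cs IHcs] j IH //= /andP[rc rcs] /andP[lc lcs] sub.
have subc l : l \in labels c -> x < l by move=> Hl'; apply: sub; rewrite mem_cat Hl'.
case: (j < nleaves c) => /=.
  by rewrite eqxx rcs lcs root_label_lt_graft // IH //; left.
rewrite eqSS rc lc; apply: IHcs => //; first by move=> c' Hc'; apply: IH; right.
by move=> l Hl'; apply: sub; rewrite mem_cat Hl' orbT.
Qed.

(* Each node [b] turns one leaf into [s_b + 1] leaves. *)
Lemma sumn_nleaves cs :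
  (forall c, List.In c cs -> nleaves c = (\sum_(b <- labels c) s_at s b).+1) ->
  sumn (map nleaves cs) = size cs + \sum_(b <- flatten (map labels cs)) s_at s b.
Proof.
elim: cs => [|c cs IH] Hcs; first by rewrite big_nil.
rewrite /= big_cat /= (Hcs c) ?IH; first by rewrite addSn; lia.
  by move=> c' Hc'; apply: Hcs; right.
by left.
Qed.

Lemma nleaves_local_ok T : local_ok s T -> nleaves T = (\sum_(b <- labels T) s_at s b).+1.
Proof.
elim/tree_ind_In: T => [|i cs IH]; first by rewrite /= big_nil.
rewrite local_ok_Node labels_Node big_cons => /and3P[/eqP Hsz _ Hl].
rewrite /= sumn_nleaves ?Hsz ?addSn // => c Hc.
by apply: IH => //; exact: all_In Hl Hc.
Qed.

Lemma nleaves_gt0 T : local_ok s T -> 0 < nleaves T.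
Proof. by move/nleaves_local_ok ->. Qed.

End Graft.

Lemma eq_from_leq_sum (r : seq nat) (F G : nat -> nat) :
  (forall b, b \in r -> F b <= G b) -> \sum_(b <- r) F b = \sum_(b <- r) G b ->
  forall b, b \in r -> F b = G b.
Proof.
elim: r => [|c r IH] // FG; rewrite !big_cons => E b.
have FGc : F c <= G c by apply: FG; rewrite mem_head.
have FGr : \sum_(b <- r) F b <= \sum_(b <- r) G b.
  by rewrite big_seq [leqRHS]big_seq; apply: leq_sum => i ir; apply: FG; rewrite in_cons ir orbT.
have Ec : F c = G c by apply/eqP; rewrite eqn_leq FGc /=; lia.
rewrite in_cons => /predU1P [-> //|br].
by apply: IH br => [i ir|]; [apply: FG; rewrite in_cons ir orbT | lia].
Qed.

Section Column.
Variables (s : seq nat) (x : nat).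

Definition graftable (T : tree) :=
  [&& local_ok s T, uniq (labels T) & x \notin labels T].

Lemma notin_has (l1 l2 : seq nat) b : ~~ has (mem l1) l2 -> b \in l2 -> b \notin l1.
Proof. by move=> H bl2; apply: contraNN H => bl1; apply/hasP; exists b. Qed.

Lemma graftable_Node_cat i cs1 c cs2 : graftable (Node i (cs1 ++ c :: cs2)) ->
  [/\ graftable c, all (local_ok s) cs1, size cs1 <= s_at s i,
      [/\ i \notin flatten (map labels cs1), i \notin labels c, i != x &
          x \notin flatten (map labels cs1)] &
      [/\ ~~ has (mem (flatten (map labels cs1))) (labels c),
          ~~ has (mem (flatten (map labels cs1))) (flatten (map labels cs2)) &
          ~~ has (mem (labels c)) (flatten (map labels cs2))]].
Proof.
rewrite /graftable local_ok_Node !all_cat labels_Node map_cat flatten_cat.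
rewrite flatten_labels_cons cons_uniq in_cons !mem_cat !negb_or !cat_uniq has_cat negb_or.
move=> /and3P[/and4P[/eqP Hsz _ l1 /andP[lc _]] U /and4P[xi x1 xc _]].
case/and5P: U => [/and3P[ni1 nic _] _ /andP[d1 d12] uc /andP[d2 _]].
split => //; first by rewrite /graftable lc uc xc.
  by move: Hsz; rewrite size_cat /= addnS => -[<-]; rewrite leq_addr.
by rewrite eq_sym.
Qed.

Lemma tinv_graft_Node_cat i cs1 c cs2 jj b :
  graftable (Node i (cs1 ++ c :: cs2)) -> jj < nleaves c ->
  tinv s (graft s x (sumn (map nleaves cs1) + jj) (Node i (cs1 ++ c :: cs2))) b x =
  if b == i then size cs1
  else if b \in flatten (map labels cs1) then s_at s b
  else if b \in labels c then tinv s (graft s x jj c) b x else 0.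
Proof.
move=> H jc; have Pc := perm_labels_graft s x jc.
have [/and3P[_ _ xc] _ _ [_ _ ix x1] _] := graftable_Node_cat H.
rewrite graft_Node_cat // tinv_Node_child; last by rewrite (perm_mem Pc) in_cons eqxx.
  case: (eqVneq b x) => [->|bx]; last by rewrite (perm_mem Pc) in_cons (negbTE bx).
  by rewrite eq_sym (negbTE ix) (negbTE x1) tinv_diag (negbTE xc); case: ifP.
have jlt : sumn (map nleaves cs1) + jj < nleaves (Node i (cs1 ++ c :: cs2)).
  by rewrite nleaves_Node_cat ltn_add2l ltn_addr.
rewrite -graft_Node_cat // (perm_uniq (perm_labels_graft s x jlt)) cons_uniq.
by case/and3P: H => _ -> ->.
Qed.

Lemma tinv_graft_le T j b : graftable T -> j < nleaves T -> b \in labels T ->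
  tinv s (graft s x j T) b x <= s_at s b.
Proof.
elim/tree_ind_In: T j => [|i cs IH] j // H.
move=> /leaf_index_split [cs1 [c [cs2 [jj [Ecs -> jc]]]]] Hb; subst cs.
have [Hc _ Hsz _ _] := graftable_Node_cat H.
rewrite tinv_graft_Node_cat //; case: eqP => [->//|_].
case: ifP => // _; case: ifP => // bc.
exact: IH (List.in_elt _ _ _) _ Hc jc bc.
Qed.

Lemma sum_tinv_graft T j : graftable T -> j < nleaves T ->
  \sum_(b <- labels T) tinv s (graft s x j T) b x = j.
Proof.
elim/tree_ind_In: T j => [|i cs IH] j H; first by rewrite /= big_nil; case: j.
move=> /leaf_index_split [cs1 [c [cs2 [jj [Ecs -> jc]]]]]; subst cs.
have [Hc l1 _ [ni1 nic _ _] [d1 d12 d2]] := graftable_Node_cat H.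
have [_ u _] := and3P H.
have Ti := tinv_graft_Node_cat _ H jc.
have left_sum : \sum_(b <- flatten (map labels cs1)) tinv s (graft s x
    (sumn (map nleaves cs1) + jj) (Node i (cs1 ++ c :: cs2))) b x =
    \sum_(b <- flatten (map labels cs1)) s_at s b.
  by apply: eq_big_seq => b b1; rewrite Ti b1 ifN //; apply: contraNneq ni1 => <-.
have mid_sum : \sum_(b <- labels c) tinv s (graft s x
    (sumn (map nleaves cs1) + jj) (Node i (cs1 ++ c :: cs2))) b x = jj.
  rewrite -[RHS](IH c (List.in_elt _ _ _) jj Hc jc); apply: eq_big_seq => b bc.
  by rewrite Ti bc (negbTE (notin_has d1 bc)) ifN //; apply: contraNneq nic => <-.
have right_sum : \sum_(b <- flatten (map labels cs2)) tinv s (graft s x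
    (sumn (map nleaves cs1) + jj) (Node i (cs1 ++ c :: cs2))) b x = 0.
  apply: big1_seq => b /andP[_ b2].
  rewrite Ti (negbTE (notin_has d12 b2)) (negbTE (notin_has d2 b2)) ifN //.
  apply: contraTneq u => <-.
  by rewrite labels_Node cons_uniq map_cat flatten_cat flatten_labels_cons !mem_cat b2 !orbT.
rewrite labels_Node map_cat flatten_cat flatten_labels_cons big_cons !big_cat.
rewrite left_sum mid_sum right_sum Ti eqxx (sumn_nleaves (s := s)).
  by rewrite /= addn0 addnA.
by move=> c' /(all_In l1) /nleaves_local_ok.
Qed.

Lemma tinv_graft_succ T j b : graftable T -> j.+1 < nleaves T -> b \in labels T ->
  tinv s (graft s x j T) b x <= tinv s (graft s x j.+1 T) b x.
Proof.
elim/tree_ind_In: T j => [|i cs IH] j // H.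
move=> /[dup] jlt /ltnW /leaf_index_split [cs1 [c [cs2 [jj [Ecs Ej jc]]]]] Hb.
subst cs j; have [Hc _ _ _ _] := graftable_Node_cat H.
case: (ltnP jj.+1 (nleaves c)) => jc'.
  rewrite -addnS !tinv_graft_Node_cat //.
  case: ifP => // _; case: ifP => // _; case: ifP => // bc.
  exact: IH (List.in_elt _ _ _) _ Hc jc' bc.
have Ec : nleaves c = jj.+1 by apply/eqP; rewrite eqn_leq jc' jc.
case: cs2 IH H jlt Hb => [|c2 cs2] IH H jlt Hb.
  by move: jlt; rewrite nleaves_Node_cat /= Ec addn0 -addnS ltnn.
have Ecat : cs1 ++ c :: c2 :: cs2 = (cs1 ++ [:: c]) ++ c2 :: cs2 by rewrite -catA.
have Ej : (sumn (map nleaves cs1) + jj).+1 = sumn (map nleaves (cs1 ++ [:: c])) + 0.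
  by rewrite map_cat sumn_cat /= Ec !addn0 addnS.
have H' : graftable (Node i ((cs1 ++ [:: c]) ++ c2 :: cs2)) by rewrite -Ecat.
have [/and3P[lc2 _ _] _ _ _ _] := graftable_Node_cat H'.
rewrite tinv_graft_Node_cat // Ej Ecat tinv_graft_Node_cat //; last exact: nleaves_gt0 lc2.
rewrite size_cat map_cat flatten_cat /= cats0 mem_cat.
case: ifP => [_|_]; first by rewrite leq_addr.
case: ifP => // _; case: ifP => // bc.
by apply: tinv_graft_le => //; rewrite Ec.
Qed.

Lemma tinv_graft_first T b : graftable T -> b \in labels T ->
  tinv s (graft s x 0 T) b x = 0.
Proof.
move=> H bT; have [lT _ _] := and3P H.
move/eqP: (sum_tinv_graft H (nleaves_gt0 lT)); rewrite sum_nat_seq_eq0.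
by move=> /allP /(_ b bT) /eqP.
Qed.

Lemma tinv_graft_last T b : graftable T -> b \in labels T ->
  tinv s (graft s x (nleaves T).-1 T) b x = s_at s b.
Proof.
move=> H bT; have [lT _ _] := and3P H.
have jlt : (nleaves T).-1 < nleaves T by rewrite prednK // (nleaves_gt0 lT).
apply: (eq_from_leq_sum (F := fun b => tinv s (graft s x _ T) b x) _ _ bT).
  by move=> c cT; apply: tinv_graft_le.
by rewrite sum_tinv_graft // (nleaves_local_ok lT).
Qed.

End Column.

(** * Pruning the smallest node *)

Fixpoint prune (x : nat) (T : tree) : tree :=
  match T with
  | Leaf => Leaf
  | Node i cs => if i == x then Leaf else Node i (map (prune x) cs)
  end.

Lemma prune_Node x i cs :
  prune x (Node i cs) = if i == x then Leaf else Node i (map (prune x) cs).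
Proof. by []. Qed.

Lemma prune_notin x T : x \notin labels T -> prune x T = T.
Proof.
elim/tree_ind_In: T => [|i cs IH] //.
rewrite labels_Node in_cons negb_or eq_sym => /andP[/negbTE xi xcs].
rewrite prune_Node xi; congr Node.
elim: cs IH xcs => [|c cs IHcs] IH //.
rewrite flatten_labels_cons mem_cat negb_or => /andP[xc xcs] /=.
rewrite IH ?IHcs //; last by left.
by move=> c' Hc'; apply: IH; right.
Qed.

Lemma map_prune_notin x cs : x \notin flatten (map labels cs) -> map (prune x) cs = cs.
Proof.
elim: cs => [|c cs IHcs] //.
by rewrite flatten_labels_cons mem_cat negb_or => /andP[xc xcs] /=; rewrite prune_notin // IHcs.
Qed.

Lemma root_label_lt_prune i x c : root_label_lt i c -> root_label_lt i (prune x c).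
Proof. by case: c => // j cs; rewrite prune_Node; case: (j == x). Qed.

Lemma local_ok_prune s x T : local_ok s T -> local_ok s (prune x T).
Proof.
elim/tree_ind_In: T => [|i cs IH] //.
rewrite prune_Node; case: (i == x) => //.
rewrite !local_ok_Node size_map !all_map => /and3P[-> Hr Hl] /=.
rewrite (sub_all _ Hr) => [|c]; last exact: root_label_lt_prune.
by apply: In_all => c Hc; apply: IH => //; apply: all_In Hl Hc.
Qed.

Section Prune.
Variable s : seq nat.

Lemma prune_graft x j T : x \notin labels T -> j < nleaves T -> prune x (graft s x j T) = T.
Proof.
elim/tree_ind_In: T j => [|i cs IH] j; first by rewrite /= eqxx.
move=> + /leaf_index_split [cs1 [c [cs2 [jj [Ecs -> jc]]]]]; subst cs.
rewrite labels_Node in_cons map_cat flatten_cat flatten_labels_cons !mem_cat !negb_or.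
move=> /andP[xi /and3P[x1 xc x2]].
rewrite graft_Node_cat // prune_Node eq_sym (negbTE xi) map_cat /=.
by rewrite !map_prune_notin // IH //; apply: List.in_elt.
Qed.

Lemma children_leaves x cs : all (root_label_lt x) cs ->
  (forall l, l \in flatten (map labels cs) -> x <= l) -> cs = nseq (size cs) Leaf.
Proof.
elim: cs => [|[|j cs'] cs IH] //= => [rcs H|/andP[rc _] H].
  by rewrite -IH // => l Hl; apply: H.
by have := H j; rewrite in_cons eqxx leqNgt rc => /(_ isT).
Qed.

Lemma graft_prune x T : local_ok s T -> uniq (labels T) -> x \in labels T ->
  (forall l, l \in labels T -> x <= l) ->
  exists2 j, j < nleaves (prune x T) & graft s x j (prune x T) = T.
Proof.
elim/tree_ind_In: T => [|i cs IH] //.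
rewrite local_ok_Node => /and3P[/eqP Hsz Hr Hl] Hu Hx Hle.
rewrite prune_Node; case: eqP => [Ei|ne].
  subst i; exists 0 => //=; rewrite /sprout -Hsz -(children_leaves Hr) //.
  by move=> l Hl'; apply: Hle; rewrite labels_Node in_cons Hl' orbT.
move: Hx; rewrite labels_Node in_cons; case: eqP => [/esym //|_] /=.
move=> /flatten_labels_split [cs1 [c [cs2 [Ecs xc x1]]]]; subst cs.
move: Hu; rewrite labels_Node cons_uniq map_cat flatten_cat flatten_labels_cons !cat_uniq.
move=> /andP[_ /and3P[_ _ /and3P[uc d2 _]]].
have x2 : x \notin flatten (map labels cs2) by apply: contraNN d2 => x2; apply/hasP; exists x.
have [jj jjlt Ejj] : exists2 jj, jj < nleaves (prune x c) & graft s x jj (prune x c) = c.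
  apply: IH (List.in_elt _ _ _) _ uc xc _; first by move: Hl; rewrite all_cat => /andP[_ /andP[]].
  move=> l Hl'; apply: Hle.
  by rewrite labels_Node in_cons map_cat flatten_cat flatten_labels_cons !mem_cat Hl' !orbT.
rewrite map_cat [map _ (_ :: _)]/= !map_prune_notin //.
have E : graft s x (sumn (map nleaves cs1) + jj) (Node i (cs1 ++ prune x c :: cs2)) =
    Node i (cs1 ++ c :: cs2) by rewrite graft_Node_cat // Ejj.
have jlt : sumn (map nleaves cs1) + jj < nleaves (Node i (cs1 ++ prune x c :: cs2)).
  by rewrite nleaves_Node_cat ltn_add2l ltn_addr.
by exists (sumn (map nleaves cs1) + jj).
Qed.

End Prune.

(** * Trees on the labels [k+1 .. m] and the inversion weight *)

Section Above.
Variable s : seq nat.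
Local Notation m := (size s).

Definition sdec_above (k : nat) (T : tree) :=
  perm_eq (labels T) (iota k.+1 (m - k)) && local_ok s T.

Lemma sdec_above0 T : sdec_above 0 T <-> s_decreasing s T.
Proof. by rewrite /sdec_above subn0; split => [/andP[]|[-> ->]]. Qed.

Lemma sdec_above_uniq k T : sdec_above k T -> uniq (labels T).
Proof. by move=> /andP[P _]; rewrite (perm_uniq P) iota_uniq. Qed.

Lemma sdec_above_mem k T l : k <= m -> sdec_above k T ->
  (l \in labels T) = (k < l <= m).
Proof. by move=> km /andP[P _]; rewrite (perm_mem P) mem_iota addSn subnKC. Qed.

Lemma sdec_above_top T : sdec_above m T <-> T = Leaf.
Proof.
rewrite /sdec_above subnn; split => [/andP[/perm_nilP]|->] //.
by case: T => // i cs.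
Qed.

Lemma graftable_sdec_above k T : k < m -> sdec_above k.+1 T -> graftable s k.+1 T.
Proof.
move=> km H; rewrite /graftable (sdec_above_uniq H) (sdec_above_mem _ km H) ltnn.
by case/andP: H => _ ->.
Qed.

Lemma iota_subS k : k < m -> iota k.+1 (m - k) = k.+1 :: iota k.+2 (m - k.+1).
Proof. by move=> km; rewrite -(subnSK km). Qed.

Lemma sdec_above_graft k T j : k < m -> sdec_above k.+1 T -> j < nleaves T ->
  sdec_above k (graft s k.+1 j T).
Proof.
move=> km H jlt; have /andP[P lT] := H; apply/andP; split.
  by apply: perm_trans (perm_labels_graft s k.+1 jlt) _; rewrite iota_subS // perm_cons.
apply: local_ok_graft => // l; rewrite (sdec_above_mem _ km H); by case/andP.
Qed.

Lemma sdec_above_prune k T : k < m -> sdec_above k T ->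
  sdec_above k.+1 (prune k.+1 T) /\
  exists2 j, j < nleaves (prune k.+1 T) & graft s k.+1 j (prune k.+1 T) = T.
Proof.
move=> km H; have /andP[P lT] := H.
have [j jlt E] : exists2 j, j < nleaves (prune k.+1 T) & graft s k.+1 j (prune k.+1 T) = T.
  apply: graft_prune => //; first exact: sdec_above_uniq H.
    by rewrite (sdec_above_mem _ (ltnW km) H) ltnSn.
  by move=> l; rewrite (sdec_above_mem _ (ltnW km) H) => /andP[].
split; last by exists j.
rewrite /sdec_above local_ok_prune // andbT -(perm_cons k.+1) -iota_subS //.
by apply: perm_trans P; rewrite -{2}E perm_sym perm_labels_graft.
Qed.

Definition s_le_above k T U :=
  forall a b, k < a -> a < b -> b <= m -> tinv s T b a <= tinv s U b a.

Definition tinv_weight k T :=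
  \sum_(k.+1 <= a < m.+1) \sum_(a.+1 <= b < m.+1) tinv s T b a.

Lemma tinv_graft_other x j T a b : a != x -> b != x ->
  tinv s (graft s x j T) b a = tinv s T b a.
Proof. by move=> ax bx; rewrite /tinv !addr_graft. Qed.

Lemma tinv_weight_graft k T j : k < m -> sdec_above k.+1 T -> j < nleaves T ->
  tinv_weight k (graft s k.+1 j T) = j + tinv_weight k.+1 T.
Proof.
move=> km H jlt; have Hg := graftable_sdec_above km H.
rewrite /tinv_weight big_ltn //; congr (_ + _).
  rewrite -[X in _ = X](sum_tinv_graft Hg jlt); apply: perm_big.
  by rewrite /index_iota subSS perm_sym; case/andP: H.
apply: eq_big_nat => a /andP[ka _]; apply: eq_big_nat => b /andP[ab _].
by rewrite tinv_graft_other // gtn_eqF // (ltn_trans ka).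
Qed.

Lemma tinv_weight_mono k T U : s_le_above k T U -> tinv_weight k T <= tinv_weight k U.
Proof.
move=> le_TU; rewrite /tinv_weight big_seq [leqRHS]big_seq.
apply: leq_sum => a; rewrite mem_index_iota ltnS => /andP[ka am].
rewrite big_seq [leqRHS]big_seq; apply: leq_sum => b.
by rewrite mem_index_iota ltnS => /andP[ab bm]; apply: le_TU.
Qed.

Lemma tinv_weight_eq k T U : s_le_above k T U -> tinv_weight k T = tinv_weight k U ->
  forall a b, k < a -> a < b -> b <= m -> tinv s T b a = tinv s U b a.
Proof.
move=> le_TU E a b ka ab bm.
have rows a' : a' \in index_iota k.+1 m.+1 ->
    \sum_(a'.+1 <= b' < m.+1) tinv s T b' a' <= \sum_(a'.+1 <= b' < m.+1) tinv s U b' a'.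
  rewrite mem_index_iota ltnS => /andP[ka' a'm].
  rewrite big_seq [leqRHS]big_seq; apply: leq_sum => b'.
  by rewrite mem_index_iota ltnS => /andP[ab' b'm]; apply: le_TU.
have a_in : a \in index_iota k.+1 m.+1 by rewrite mem_index_iota ka ltnS (leq_trans (ltnW ab)).
apply: (eq_from_leq_sum (F := fun b' => tinv s T b' a) _ (eq_from_leq_sum rows E a_in)).
  by move=> b'; rewrite mem_index_iota ltnS => /andP[ab' b'm]; apply: le_TU.
by rewrite mem_index_iota ab ltnS.
Qed.

Lemma sdec_above_inj k T U : k <= m -> sdec_above k T -> sdec_above k U ->
  (forall a b, k < a -> a < b -> b <= m -> tinv s T b a = tinv s U b a) -> T = U.
Proof.
move Hn : (m - k) => n; elim: n k Hn T U => [|n IH] k Hn T U km HT HU E.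
  have Ekm : k = m by apply/eqP; rewrite eqn_leq km -subn_eq0 Hn.
  by rewrite Ekm in HT HU; rewrite (sdec_above_top T).1 // (sdec_above_top U).1.
have km' : k < m by rewrite -subn_gt0 Hn.
have [HT' [j jlt ET]] := sdec_above_prune km' HT.
have [HU' [j' jlt' EU]] := sdec_above_prune km' HU.
move: (prune k.+1 T) (prune k.+1 U) HT' HU' jlt jlt' ET EU => T' U' HT' HU' jlt jlt' ET EU.
have E' : T' = U'.
  apply: (IH k.+1) => //; first by rewrite subnS Hn.
  move=> a b ka ab bm; have ka' := ltnW ka.
  have na : a != k.+1 by rewrite gtn_eqF.
  have nb : b != k.+1 by rewrite gtn_eqF // (ltn_trans ka).
  rewrite -(tinv_graft_other j T' na nb) -(tinv_graft_other j' U' na nb) ET EU.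
  exact: E.
subst U'; have Ej : j = j'.
  rewrite -(sum_tinv_graft (graftable_sdec_above km' HT') jlt).
  rewrite -(sum_tinv_graft (graftable_sdec_above km' HT') jlt') ET EU.
  apply: eq_big_seq => b; rewrite (sdec_above_mem _ km' HT') => /andP[kb bm].
  exact: E.
by rewrite -ET -EU Ej.
Qed.

End Above.

Section Steps.
Variable s : seq nat.
Local Notation m := (size s).

Definition weight_step k T U :=
  [/\ sdec_above s k T, sdec_above s k U, s_le_above s k T U &
      tinv_weight s k U = (tinv_weight s k T).+1].

(* The weight is strictly monotone and a tree is determined by its inversions,
   so nothing fits strictly between the two ends of a weight step. *)
Lemma s_cover_of_weight_step T U : weight_step 0 T U -> s_cover s T U.
Proof.
case=> HT HU le_TU wTU.
split => //; [exact/sdec_above0 | exact/sdec_above0 | |].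
  by move=> ETU; move: wTU; rewrite ETU => /n_Sn.
move=> V /sdec_above0 HV le_TV le_VU.
have wTV := tinv_weight_mono le_TV; have wVU := tinv_weight_mono le_VU.
case: (eqVneq (tinv_weight s 0 V) (tinv_weight s 0 T)) => [E|NE].
  by left; apply/esym/(sdec_above_inj (leq0n _) HT HV); apply: tinv_weight_eq => //; rewrite E.
right; apply: (sdec_above_inj (leq0n _) HV HU); apply: tinv_weight_eq => //.
by apply/eqP; rewrite eqn_leq wVU wTU ltn_neqAle eq_sym NE.
Qed.

Lemma s_le_above_graft k A B jA jB : k < m -> sdec_above s k.+1 A ->
  s_le_above s k.+1 A B ->
  (forall b, b \in labels A ->
     tinv s (graft s k.+1 jA A) b k.+1 <= tinv s (graft s k.+1 jB B) b k.+1) ->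
  s_le_above s k (graft s k.+1 jA A) (graft s k.+1 jB B).
Proof.
move=> km HA le_AB col a b ka ab bm.
case: (eqVneq a k.+1) => [Ea|na].
  by subst a; apply: col; rewrite (sdec_above_mem _ km HA) ab.
have ka' : k.+1 < a by rewrite ltn_neqAle eq_sym na.
have nb : b != k.+1 by rewrite gtn_eqF // (ltn_trans ka').
by rewrite !tinv_graft_other //; apply: le_AB.
Qed.

Lemma weight_step_graft_succ k T j : k < m -> sdec_above s k.+1 T -> j.+1 < nleaves T ->
  weight_step k (graft s k.+1 j T) (graft s k.+1 j.+1 T).
Proof.
move=> km HT jlt; have jlt' := ltnW jlt.
split; [exact: sdec_above_graft | exact: sdec_above_graft | |].
  apply: s_le_above_graft => // b bT.
  exact: tinv_graft_succ (graftable_sdec_above km HT) jlt bT.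
by rewrite !tinv_weight_graft.
Qed.

Lemma weight_step_graft k A B jA jB : k < m -> weight_step k.+1 A B ->
  jA < nleaves A -> jB < nleaves B ->
  (forall b, b \in labels A ->
     tinv s (graft s k.+1 jA A) b k.+1 = tinv s (graft s k.+1 jB B) b k.+1) ->
  weight_step k (graft s k.+1 jA A) (graft s k.+1 jB B).
Proof.
move=> km [HA HB le_AB wAB] jAlt jBlt col.
have PAB : perm_eq (labels A) (labels B).
  by case/andP: HA => PA _; case/andP: HB => PB _; rewrite (perm_trans PA) // perm_sym.
split; [exact: sdec_above_graft | exact: sdec_above_graft | |].
  by apply: s_le_above_graft => // b /col ->.
rewrite !tinv_weight_graft // wAB addnS; congr (_ + _).+1.
rewrite -(sum_tinv_graft (graftable_sdec_above km HA) jAlt).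
rewrite -(sum_tinv_graft (graftable_sdec_above km HB) jBlt) -(perm_big _ PAB).
by apply: eq_big_seq => b /col.
Qed.

End Steps.

Section Chain.
Variables (A : Type) (R : A -> A -> Prop).

Fixpoint chain (l : seq A) : Prop :=
  if l is a :: l' then (if l' is b :: _ then R a b else True) /\ chain l' else True.

Lemma chainP d l :
  chain l <-> forall i, i.+1 < size l -> R (nth d l i) (nth d l i.+1).
Proof.
elim: l => [|a l IH] //=; split.
  case=> Ra /IH Rl [|i] /=; first by case: l Ra {IH Rl}.
  by rewrite ltnS; apply: Rl.
move=> Rl; split; first by case: l {IH} Rl => // b l /(_ 0 isT).
by apply/IH => i ilt; apply: (Rl i.+1).
Qed.

Lemma chain_cat d l1 l2 : chain l1 -> chain l2 ->
  (0 < size l1 -> 0 < size l2 -> R (last d l1) (head d l2)) -> chain (l1 ++ l2).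
Proof.
elim: l1 => [|a l1 IH] /=; first by move=> _ c2.
move=> [Ra c1] c2 link; split.
  case: l1 {IH c1} Ra link => [|b l1] //= _ /(_ isT).
  by case: l2 {c2} => // b l2 /(_ isT).
apply: IH => // lt1 lt2.
by case: l1 {Ra c1} lt1 link => // b l1 _ /(_ isT lt2).
Qed.

Hypothesis R_sym : forall a b, R a b -> R b a.

Lemma chain_rev l : chain l -> chain (rev l).
Proof.
elim: l => [|a l IH] //= [Ra cl]; rewrite rev_cons -cats1.
apply: (chain_cat (d := a)) => //; first exact: IH.
by case: l {IH cl} Ra => //= b l Rab _ _; rewrite rev_cons last_rcons; apply: R_sym.
Qed.

End Chain.

Lemma In_mem (T : eqType) (x : T) l : List.In x l <-> x \in l.
Proof.
elim: l => [|a l IH] //=; rewrite in_cons IH.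
by split => [[->|->]|/orP[/eqP ->|->]]; rewrite ?eqxx ?orbT //; [left | right].
Qed.

Lemma uniq_NoDup (T : eqType) (l : seq T) : uniq l -> List.NoDup l.
Proof.
elim: l => [|a l IH] /= ; first by constructor.
by move=> /andP[al ul]; constructor; [move/In_mem; apply/negP | exact: IH].
Qed.

(** * The boustrophedon listing *)

Section Boustrophedon.
Variable s : seq nat.
Local Notation m := (size s).

Definition leaf_order (up : bool) (n : nat) := if up then iota 0 n else rev (iota 0 n).

Lemma mem_leaf_order up n j : (j \in leaf_order up n) = (j < n).
Proof. by case: up; rewrite /= ?mem_rev mem_iota. Qed.

Lemma uniq_leaf_order up n : uniq (leaf_order up n).
Proof. by case: up; rewrite /= ?rev_uniq iota_uniq. Qed.

Lemma size_leaf_order up n : size (leaf_order up n) = n.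
Proof. by case: up; rewrite /= ?size_rev size_iota. Qed.

Lemma nth_leaf_order up n i : i < n ->
  nth 0 (leaf_order up n) i = if up then i else n - i.+1.
Proof.
move=> lt; case: up; rewrite /= ?nth_rev ?size_iota ?nth_iota //.
by rewrite ltn_subrL (leq_ltn_trans _ lt).
Qed.

Definition graft_block x up T := [seq graft s x j T | j <- leaf_order up (nleaves T)].

Fixpoint boustrophedon x up Ts :=
  if Ts is T :: Ts' then graft_block x up T ++ boustrophedon x (~~ up) Ts' else [::].

Definition linked k T U := weight_step s k T U \/ weight_step s k U T.

Lemma linked_sym k T U : linked k T U -> linked k U T.
Proof. by case; [right | left]. Qed.

Lemma In_graft_block x up T U :
  List.In U (graft_block x up T) <-> exists2 j, j < nleaves T & U = graft s x j T.
Proof.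
rewrite List.in_map_iff; split => [[j [<- /In_mem]]|[j jlt ->]].
  by rewrite mem_leaf_order; exists j.
by exists j; split => //; apply/In_mem; rewrite mem_leaf_order.
Qed.

Lemma In_boustrophedon x up Ts U : List.In U (boustrophedon x up Ts) <->
  exists2 T, List.In T Ts & exists2 j, j < nleaves T & U = graft s x j T.
Proof.
elim: Ts up => [|T Ts IH] up /=; first by split => // [[]].
rewrite List.in_app_iff In_graft_block IH; split.
  by case=> [HU|[T' HT' HU]]; [exists T; [left|] | exists T'; [right|]].
by case=> T' [<-|HT'] HU; [left | right; exists T'].
Qed.

Definition end_leaf (up : bool) (n : nat) := if up then n.-1 else 0.

Lemma head_graft_block d x up T : 0 < nleaves T ->
  head d (graft_block x up T) = graft s x (end_leaf (~~ up) (nleaves T)) T.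
Proof.
move=> n_gt0; rewrite -nth0 (nth_map 0); last by rewrite size_leaf_order.
by rewrite nth_leaf_order //; case: up; rewrite //= subn1.
Qed.

Lemma last_graft_block d x up T : 0 < nleaves T ->
  last d (graft_block x up T) = graft s x (end_leaf up (nleaves T)) T.
Proof.
move=> n_gt0; rewrite -nth_last size_map size_leaf_order (nth_map 0); last first.
  by rewrite size_leaf_order ltn_predL.
rewrite nth_leaf_order ?ltn_predL //.
by case: up => //=; rewrite prednK // subnn.
Qed.

Lemma chain_graft_block k up T : k < m -> sdec_above s k.+1 T ->
  chain (linked k) (graft_block k.+1 up T).
Proof.
move=> km HT.
have up_chain : chain (linked k) (graft_block k.+1 true T).
  apply/(chainP _ Leaf) => j; rewrite size_map size_leaf_order => jlt.
  rewrite !(nth_map 0) ?size_leaf_order ?(ltnW jlt) // !nth_leaf_order ?(ltnW jlt) //.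
  by left; apply: weight_step_graft_succ.
case: up => //; rewrite /graft_block /= map_rev.
exact: (chain_rev (@linked_sym k) up_chain).
Qed.

Lemma end_leaf_lt up n : 0 < n -> end_leaf up n < n.
Proof. by case: up => //=; rewrite ltn_predL. Qed.

Lemma tinv_graft_end k up T b : k < m -> sdec_above s k.+1 T -> b \in labels T ->
  tinv s (graft s k.+1 (end_leaf up (nleaves T)) T) b k.+1 = if up then s_at s b else 0.
Proof.
move=> km HT bT; have HTg := graftable_sdec_above km HT.
by case: up; [apply: tinv_graft_last | apply: tinv_graft_first].
Qed.

Lemma linked_graft_end k up A B : k < m -> linked k.+1 A B ->
  linked k (graft s k.+1 (end_leaf up (nleaves A)) A)
           (graft s k.+1 (end_leaf up (nleaves B)) B).
Proof.
move=> km AB.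
suff lift A' B' : weight_step s k.+1 A' B' -> weight_step s k
    (graft s k.+1 (end_leaf up (nleaves A')) A') (graft s k.+1 (end_leaf up (nleaves B')) B').
  by case: AB => [/lift|/lift]; [left | right].
move=> st; have [HA HB _ _] := st.
have n_gt0 T : sdec_above s k.+1 T -> 0 < nleaves T.
  by case/andP => _; apply: nleaves_gt0.
apply: weight_step_graft => //; try exact/end_leaf_lt/n_gt0.
move=> b bA; have bB : b \in labels B'.
  by rewrite (sdec_above_mem _ km HB) -(sdec_above_mem _ km HA).
by rewrite !tinv_graft_end.
Qed.

Lemma chain_boustrophedon k up Ts : k < m ->
  (forall T, List.In T Ts -> sdec_above s k.+1 T) ->
  chain (linked k.+1) Ts -> chain (linked k) (boustrophedon k.+1 up Ts).
Proof.
move=> km; elim: Ts up => [|T Ts IH] up //= HTs [link cTs].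
have HT := HTs T (or_introl erefl).
have n_gt0 : 0 < nleaves T by case/andP: HT => _; apply: nleaves_gt0.
apply: (chain_cat (d := Leaf)); first exact: chain_graft_block.
  by apply: IH => // T' HT'; apply: HTs; right.
case: Ts HTs {IH cTs} link => [|T2 Ts] HTs //= link _ _.
have HT2 := HTs T2 (or_intror (or_introl erefl)).
have n2_gt0 : 0 < nleaves T2 by case/andP: HT2 => _; apply: nleaves_gt0.
have ne2 : 0 < size (graft_block k.+1 (~~ up) T2) by rewrite size_map size_leaf_order.
have := head_graft_block Leaf k.+1 (~~ up) n2_gt0; rewrite negbK last_graft_block //.
case: (graft_block _ _ T2) ne2 => [|U B] //= _ ->.
exact: linked_graft_end.
Qed.

Lemma NoDup_boustrophedon k up Ts : k < m ->
  (forall T, List.In T Ts -> sdec_above s k.+1 T) ->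
  List.NoDup Ts -> List.NoDup (boustrophedon k.+1 up Ts).
Proof.
move=> km; elim: Ts up => [|T Ts IH] up HTs /= ND; first by constructor.
have /List.NoDup_cons_iff [TTs NDTs] := ND.
have HTg := graftable_sdec_above km (HTs T (or_introl erefl)).
apply: List.NoDup_app.
- apply: List.NoDup_map_NoDup_ForallPairs; last exact/uniq_NoDup/uniq_leaf_order.
  move=> j j' /In_mem; rewrite mem_leaf_order => jlt /In_mem; rewrite mem_leaf_order => jlt' E.
  by rewrite -(sum_tinv_graft HTg jlt) -(sum_tinv_graft HTg jlt') E.
- by apply: IH => // T' HT'; apply: HTs; right.
- move=> U /In_graft_block [j jlt ->] /In_boustrophedon [T' HT' [j' jlt' E]].
  have [_ _ xT'] := and3P (graftable_sdec_above km (HTs T' (or_intror HT'))).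
  have [_ _ xT] := and3P HTg.
  by move: (prune_graft s xT jlt); rewrite E prune_graft // => ET'; apply: TTs; rewrite -ET'.
Qed.

End Boustrophedon.

Section Listing.
Variable s : seq nat.
Local Notation m := (size s).

Fixpoint sjt_list (n : nat) : seq tree :=
  if n is n'.+1 then boustrophedon s (m - n') true (sjt_list n') else [:: Leaf].

Lemma sjt_list_spec n : n <= m ->
  [/\ forall U, List.In U (sjt_list n) <-> sdec_above s (m - n) U,
      List.NoDup (sjt_list n) & chain (linked s (m - n)) (sjt_list n)].
Proof.
elim: n => [|n IH] nm.
  rewrite subn0; split => //=; last by repeat constructor.
  by move=> U; rewrite (sdec_above_top s U); split => [[<-|[]]|->] //; left.
have [memL NDL chL] := IH (ltnW nm).
have km : m - n.+1 < m by rewrite ltn_subrL (leq_ltn_trans _ nm).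
rewrite /= -(subnSK nm) in memL chL *.
move: (m - n.+1) km memL chL => k km memL chL.
have HL T : List.In T (sjt_list n) -> sdec_above s k.+1 T by move/memL.
split; [|exact: NoDup_boustrophedon | exact: chain_boustrophedon].
move=> U; rewrite In_boustrophedon; split => [[T /HL HT [j jlt ->]]|HU].
  exact: sdec_above_graft.
have [HU' [j jlt E]] := sdec_above_prune km HU.
by exists (prune k.+1 U); [apply/memL | exists j].
Qed.

End Listing.

Theorem theorem1 (s : seq nat) (hs : all (fun x => 0 < x) s) :
  exists L : seq tree,
    List.NoDup L /\
    (forall T, List.In T L <-> s_decreasing s T) /\
    (forall i, i.+1 < size L ->
       s_cover s (nth Leaf L i) (nth Leaf L i.+1) \/
       s_cover s (nth Leaf L i.+1) (nth Leaf L i)).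
Proof.
have [memL NDL chL] := sjt_list_spec (leqnn (size s)).
rewrite subnn in memL chL.
exists (sjt_list s (size s)); split => //; split.
  by move=> T; rewrite memL sdec_above0.
move=> i /((chainP _ Leaf _).1 chL i) [] st; [left | right]; exact: s_cover_of_weight_step.
Qed.
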